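(* A 2-edge-colored graph $G$ is PC acyclic of type 5 if and only if $G$ is bipartite and has no PC cycle.
   Context: A 2-edge-colored graph is a finite undirected graph in which every edge is colored with one of two colors. A walk $v_1e_1v_2\dots e_{p-1}v_p$ is properly colored (PC) if consecutive edges $e_i,e_{i+1}$ have different colors and, if closed ($v_1=v_p$), $e_{p-1}$ and $e_1$ also differ in color; a PC cycle is a PC closed walk whose vertices other than the first/last are distinct. An ordering $v_1,\dots,v_n$ of $V(G)$ is of type 5 if for every $i\in[n]$, all edges from $v_i$ to $\{v_{i+1},\dots,v_n\}$ have the same color, all edges from $v_i$ to $\{v_1,\dots,v_{i-1}\}$ have the same color, and these two colors are different. $G$ is PC acyclic of type 5 if it has an ordering of its vertices of type 5. *)

From mathcomp Require Import all_boot.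
Set Implicit Arguments. Unset Strict Implicit. Unset Printing Implicit Defensive.

(* A 2-edge-colored (simple, finite, undirected) graph on a finite vertex
   type T is given by a symmetric irreflexive adjacency relation adj and a
   symmetric coloring col : T -> T -> bool (two colors = false/true);
   col x y is the color of the edge xy whenever adj x y. *)

Definition bipartite (T : finType) (adj : rel T) : Prop :=
  exists f : T -> bool, forall x y, adj x y -> f x != f y.

Definition pc_cycle (T : finType) (adj : rel T) (col : T -> T -> bool)
    (s : seq T) : Prop :=
  match s with
  | [::] => False
  | x :: _ =>
    let k := size s in
    let v i := nth x s (i %% k) in
    uniq s /\
    forall i, i < k ->
      adj (v i) (v i.+1) /\ col (v i) (v i.+1) != col (v i.+1) (v i.+2)
  end.

Definition type5_ordering (T : finType) (adj : rel T) (col : T -> T -> bool)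
    (s : seq T) : Prop :=
  uniq s /\ (forall x, x \in s) /\
  forall x, exists c : bool, forall y, adj x y ->
    (index x s < index y s -> col x y = c) /\
    (index y s < index x s -> col x y = ~~ c).

Definition pc_acyclic_type5 (T : finType) (adj : rel T) (col : T -> T -> bool)
  : Prop := exists s, type5_ordering adj col s.

From mathcomp Require Import all_boot.
From Stdlib Require Import ClassicalEpsilon.
Set Implicit Arguments. Unset Strict Implicit.

(* Forward: a type-5 ordering attaches to each vertex x a colour c x such
   that every edge xy with x before y has colour c x and also ~~ c y.  Hence
   c is a bipartition, and the last vertex m of a cycle sees both of its cycle
   edges in the same colour ~~ c m, so the cycle is not PC.
   Backward: orient each edge xy from x to y when its colour is f x, where f
   is a bipartition.  A directed cycle of this orientation alternates colours,
   i.e. is a PC cycle, so the orientation is acyclic; any topological order of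
   it is then of type 5, with c := f. *)

Lemma cycle_nth_mod (T : eqType) (e : rel T) (x0 : T) (s : seq T) :
  cycle e s -> s != [::] -> forall i,
  e (nth x0 s (i %% size s)) (nth x0 s (i.+1 %% size s)).
Proof.
case: s => [|y p] //; rewrite /cycle => /(pathP x0) Hp _ i.
set k := size (y :: p).
have kE : k = (size p).+1 by [].
have -> : i.+1 %% k = (i %% k).+1 %% k by rewrite -addn1 -modnDml addn1.
have : i %% k < k by rewrite ltn_mod kE.
move: (i %% k) => j jk.
have := Hp j; rewrite size_rcons -kE => /(_ jk).
rewrite -rcons_cons !nth_rcons /= -kE jk.
have [jp|jp] := ltnP j (size p); first by rewrite modn_small ?kE ?ltnS // ltnW.
have -> : j = size p by apply/eqP; rewrite eqn_leq jp -ltnS -kE jk.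
by rewrite kE modnn eqxx nth0.
Qed.

Lemma index_neq (T : eqType) (s : seq T) x y :
  (forall z, z \in s) -> x != y -> index x s != index y s.
Proof. by move=> s_all; apply: contra => /eqP/index_inj ->. Qed.

Definition acyclic (T : finType) (e : rel T) :=
  forall x y, e x y -> ~~ connect e y x.

Lemma acyclic_rank_lt (T : finType) (e : rel T) : acyclic e ->
  forall x y, e x y -> #|[set z | connect e z x]| < #|[set z | connect e z y]|.
Proof.
move=> acyc x y exy; apply: proper_card; apply/properP; split.
  apply/subsetP => z; rewrite !inE => /connect_trans; apply.
  exact: connect1.
by exists y; rewrite inE ?connect0 ?(negbTE (acyc x y exy)).
Qed.

Lemma topological_order (T : finType) (e : rel T) : acyclic e ->
  exists s : seq T, [/\ uniq s, forall x, x \in s &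
    forall x y, e x y -> index x s < index y s].
Proof.
move=> acyc; pose rank x := #|[set z | connect e z x]|.
pose le_rank := [rel a b | rank a <= rank b].
pose s := sort le_rank (enum T).
have s_all x : x \in s by rewrite mem_sort mem_enum.
have s_sorted : sorted le_rank s by apply: sort_sorted => a b; exact: leq_total.
have le_rank_trans : transitive le_rank by move=> ? ? ?; exact: leq_trans.
exists s; split=> [|//|x y exy]; first by rewrite sort_uniq enum_uniq.
have x_neq_y : x != y.
  apply: contraTneq exy => ->; apply/negP => eyy.
  by move: (acyc y y eyy); rewrite connect0.
rewrite ltn_neqAle (index_neq s_all x_neq_y) leqNgt /=; apply/negP.
move=> /(sorted_ltn_index le_rank_trans s_sorted y x (s_all y) (s_all x)).
by rewrite /= leqNgt (acyclic_rank_lt acyc exy).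
Qed.

Section TwoEdgeColouredGraph.
Variables (T : finType) (adj : rel T) (col : T -> T -> bool).
Hypotheses (adj_sym : symmetric adj) (adj_irr : irreflexive adj)
  (col_sym : forall x y, col x y = col y x).

Lemma adj_index_neq (s : seq T) x y :
  (forall z, z \in s) -> adj x y -> index x s != index y s.
Proof.
move=> s_all axy; apply: index_neq => //.
by apply: contraTneq axy => ->; rewrite adj_irr.
Qed.

Lemma type5_colors s : type5_ordering adj col s ->
  exists c : T -> bool, forall x y, adj x y -> index x s < index y s ->
    col x y = c x /\ col x y = ~~ c y.
Proof.
move=> [_ [_ Hs]].
exists (fun x => proj1_sig (constructive_indefinite_description _ (Hs x))).
move=> x y axy lt_xy.
case: constructive_indefinite_description => cx Hx.
case: constructive_indefinite_description => cy Hy /=.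
have ayx : adj y x by rewrite adj_sym.
by split; [exact: (Hx y axy).1 | rewrite col_sym; exact: (Hy x ayx).2].
Qed.

Lemma type5_bipartite s : type5_ordering adj col s -> bipartite adj.
Proof.
move=> s5; have [c Hc] := type5_colors s5; exists c => x y axy.
have ayx : adj y x by rewrite adj_sym.
have := adj_index_neq s5.2.1 axy.
case: ltngtP => // [lt_xy | lt_yx] _.
- by have [<- ->] := Hc x y axy lt_xy; case: (c y).
- by have [<- ->] := Hc y x ayx lt_yx; case: (c x).
Qed.

Lemma pc_cycle_turn s m : pc_cycle adj col s -> m \in s ->
  exists a b, [/\ a \in s, b \in s, adj a m, adj m b & col a m != col m b].
Proof.
case: s => [|x s'] // [_ Hc] ms.
set s := x :: s'; set k := size s; pose v n := nth x s (n %% k).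
have Hv n : adj (v n) (v n.+1) /\ col (v n) (v n.+1) != col (v n.+1) (v n.+2).
  have := Hc (n %% k); rewrite -/s -/k ltn_mod => /(_ isT).
  by rewrite /v modn_mod -[(n %% k).+2]addn2 -[(n %% k).+1]addn1 !modnDml addn1 addn2.
have vs n : v n \in s by rewrite mem_nth // ltn_mod.
have vm : v (index m s) = m by rewrite /v modn_small ?index_mem ?nth_index.
have [am turn] := Hv (index m s + size s').
have [mb _] := Hv (index m s).
have v_period n : v (n + k) = v n by rewrite /v modnDr.
have prev_m : v (index m s + size s').+1 = m by rewrite -addnS v_period vm.
have next_m : v (index m s + size s').+2 = v (index m s).+1.
  by rewrite -addnS -addSn v_period.
rewrite prev_m next_m in am turn; rewrite vm in mb.
by exists (v (index m s + size s')), (v (index m s).+1).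
Qed.

Lemma type5_no_pc_cycle s : type5_ordering adj col s ->
  ~ exists t, pc_cycle adj col t.
Proof.
move=> s5 [[|x t] // t_pc]; have [c Hc] := type5_colors s5.
have s_all := s5.2.1.
have [m mt m_last] := @arg_maxnP T x (mem (x :: t)) (index^~ s) (mem_head x t).
have [a [b [a_t b_t am mb turn]]] := pc_cycle_turn t_pc mt.
have before_m z : z \in x :: t -> adj z m -> index z s < index m s.
  move=> zt zm; rewrite ltn_neqAle adj_index_neq //=; exact: m_last.
have bm : adj b m by rewrite adj_sym.
have [_ col_am] := Hc a m am (before_m a a_t am).
have [_ col_bm] := Hc b m bm (before_m b b_t bm).
by move: turn; rewrite (col_sym m b) col_am col_bm eqxx.
Qed.

Definition orient (f : T -> bool) : rel T :=
  [rel x y | adj x y && (col x y == f x)].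

Section Bipartition.
Variable f : T -> bool.
Hypothesis f_bip : forall x y, adj x y -> f x != f y.

Lemma orient_cycle_pc y p : cycle (orient f) (y :: p) -> uniq (y :: p) ->
  pc_cycle adj col (y :: p).
Proof.
move=> cyc uniq_yp; split=> // i _.
have := cycle_nth_mod y cyc isT i; have := cycle_nth_mod y cyc isT i.+1.
move=> /andP[_ /eqP ->] /andP[ab /eqP ->]; split=> //.
by rewrite f_bip.
Qed.

Lemma orient_acyclic : ~ (exists s, pc_cycle adj col s) -> acyclic (orient f).
Proof.
move=> no_pc x y exy; apply/negP => /connectP[p yp x_last].
move: exy; rewrite x_last; case: (shortenP yp) => p' yp' uniq_p' _ e_last.
apply: no_pc; exists (y :: p'); apply: orient_cycle_pc => //.
by rewrite /cycle rcons_path yp'.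
Qed.

Lemma topological_order_type5 s : uniq s -> (forall x, x \in s) ->
  (forall x y, orient f x y -> index x s < index y s) ->
  type5_ordering adj col s.
Proof.
move=> uniq_s s_all orient_fwd; split=> //; split=> // x.
exists (f x) => y axy; have ayx : adj y x by rewrite adj_sym.
split=> lt.
- apply/eqP; apply: contraTT lt => col_neq; rewrite -leqNgt ltnW //.
  apply: orient_fwd; rewrite /orient /= ayx col_sym.
  by move: col_neq (f_bip axy); case: (col x y); case: (f x); case: (f y).
- apply: contraTeq lt => col_neq; rewrite -leqNgt ltnW //.
  apply: orient_fwd; rewrite /orient /= axy.
  by move: col_neq; case: (col x y); case: (f x).
Qed.
End Bipartition.
End TwoEdgeColouredGraph.

Theorem corollary2 (T : finType) (adj : rel T) (col : T -> T -> bool)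
  (adj_sym : symmetric adj) (adj_irr : irreflexive adj)
  (col_sym : forall x y, col x y = col y x) :
  pc_acyclic_type5 adj col <->
  (bipartite adj /\ ~ (exists s : seq T, pc_cycle adj col s)).
Proof.
split=> [[s s5] | [[f f_bip] no_pc]].
  split; [exact: type5_bipartite s5 | exact: type5_no_pc_cycle s5].
have [s [uniq_s s_all orient_fwd]] :=
  topological_order (orient_acyclic f_bip no_pc).
by exists s; apply: (topological_order_type5 adj_sym col_sym f_bip).
Qed.
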